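(* An element $\boldsymbol\pi\in H_{1,2,2}$ is a prime of $H_{1,2,2}$ if and only if $N(\boldsymbol\pi)$ is a rational prime.
   Context: Let $\mathbf{i},\mathbf{j},\mathbf{k}$ be the standard quaternion units; $\overline{\mathbf{q}}$ is quaternion conjugation and $N(\mathbf{q})=\mathbf{q}\overline{\mathbf{q}}$. $H_{1,2,2}$ is the subring of the quaternions equal to the $\mathbb{Z}$-module generated by $\mathbf{v}_1=1$, $\mathbf{v}_2=\mathbf{i}$, $\mathbf{v}_3=\tfrac12(1+\mathbf{i}+\sqrt2\,\mathbf{j})$, $\mathbf{v}_4=\tfrac12(1+\mathbf{i}+\sqrt2\,\mathbf{k})$. A unit is an element invertible in $H_{1,2,2}$ (equivalently of norm 1). A prime of $H_{1,2,2}$ is a nonzero nonunit $\boldsymbol\pi$ such that whenever $\boldsymbol\pi=\mathbf{a}\mathbf{b}$ with $\mathbf{a},\mathbf{b}\in H_{1,2,2}$, at least one of $\mathbf{a},\mathbf{b}$ is a unit. *)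

From Stdlib Require Import Reals ZArith Znumtheory.
Open Scope R_scope.

Record quat := Quat { q0 : R; q1 : R; q2 : R; q3 : R }.

Definition qadd (p q : quat) : quat :=
  Quat (q0 p + q0 q) (q1 p + q1 q) (q2 p + q2 q) (q3 p + q3 q).

Definition qscale (r : R) (q : quat) : quat :=
  Quat (r * q0 q) (r * q1 q) (r * q2 q) (r * q3 q).

(* Hamilton product: i^2 = j^2 = k^2 = ijk = -1. *)
Definition qmul (p q : quat) : quat :=
  Quat (q0 p * q0 q - q1 p * q1 q - q2 p * q2 q - q3 p * q3 q)
       (q0 p * q1 q + q1 p * q0 q + q2 p * q3 q - q3 p * q2 q)
       (q0 p * q2 q - q1 p * q3 q + q2 p * q0 q + q3 p * q1 q)
       (q0 p * q3 q + q1 p * q2 q - q2 p * q1 q + q3 p * q0 q).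

Definition qconj (q : quat) : quat := Quat (q0 q) (- q1 q) (- q2 q) (- q3 q).

Definition qzero : quat := Quat 0 0 0 0.
Definition qone : quat := Quat 1 0 0 0.
Definition qi : quat := Quat 0 1 0 0.
Definition qj : quat := Quat 0 0 1 0.
Definition qk : quat := Quat 0 0 0 1.

Definition qreal (r : R) : quat := Quat r 0 0 0.

Definition qnorm (q : quat) : quat := qmul q (qconj q).

Definition v1 : quat := qone.
Definition v2 : quat := qi.
Definition v3 : quat := qscale (1/2) (qadd (qadd qone qi) (qscale (sqrt 2) qj)).
Definition v4 : quat := qscale (1/2) (qadd (qadd qone qi) (qscale (sqrt 2) qk)).

Definition inH (q : quat) : Prop :=
  exists a b c d : Z,
    q = qadd (qadd (qscale (IZR a) v1) (qscale (IZR b) v2))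
             (qadd (qscale (IZR c) v3) (qscale (IZR d) v4)).

Definition isUnitH (u : quat) : Prop :=
  inH u /\ exists v, inH v /\ qmul u v = qone /\ qmul v u = qone.

Definition isPrimeH (p : quat) : Prop :=
  inH p /\ p <> qzero /\ ~ isUnitH p /\
  forall a b : quat, inH a -> inH b -> p = qmul a b -> isUnitH a \/ isUnitH b.

Definition norm_is_rational_prime (q : quat) : Prop :=
  exists p : Z, prime p /\ qnorm q = qreal (IZR p).

(* H_{1,2,2} is right norm-Euclidean: rounding the coordinates of conj(d) z
   to multiples of N(d) gives q with N(z - d q) < N(d).  Hence any two
   elements generate a principal right ideal.  If a rational prime p divides
   N(x), the generator d of xH + pH satisfies N(d) | p^2, and the cases
   N(d) = 1 and N(d) = p^2 both force p to divide x.  A pigeonhole argument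
   gives p | x^2 + y^2 + 1, which is the norm of x + y i + (j + k)/sqrt 2, so
   every rational prime is a norm p = a conj(a); thus a prime x is not
   divisible by p, so x = d q with N(d) = p, and q must be a unit.  The
   converse is multiplicativity of N. *)

From Stdlib Require Import Reals ZArith Znumtheory.
From Stdlib Require Import Lia Lra List Classical.

Open Scope Z_scope.

(* [H122 a b c d] stands for a v1 + b v2 + c v3 + d v4; the multiplication
   table below is that of the quaternion product in this basis (see
   [to_quat_mul]). *)
Record H122 := mkH { h1 : Z; h2 : Z; h3 : Z; h4 : Z }.

Definition hZ (n : Z) : H122 := mkH n 0 0 0.

Definition hadd (x y : H122) : H122 :=
  mkH (h1 x + h1 y) (h2 x + h2 y) (h3 x + h3 y) (h4 x + h4 y).

Definition hsub (x y : H122) : H122 :=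
  mkH (h1 x - h1 y) (h2 x - h2 y) (h3 x - h3 y) (h4 x - h4 y).

Definition hmul (x y : H122) : H122 :=
  let (a, b, c, d) := x in let (e, f, g, h) := y in
  mkH (a*e - b*f - b*g - c*g - d*f - d*g - d*h)
      (a*f + b*e + b*h + c*f + c*h - d*g)
      (a*g - b*h + c*e + c*g + d*f + d*g)
      (a*h + b*g - c*f + d*e + d*g + d*h).

Definition hconj (x : H122) : H122 :=
  let (a, b, c, d) := x in mkH (a + c + d) (- b) (- c) (- d).

Definition hnorm (x : H122) : Z :=
  let (a, b, c, d) := x in
  a*a + b*b + c*c + d*d + a*c + a*d + b*c + b*d + c*d.

Ltac hcase := repeat match goal with x : H122 |- _ => destruct x end.
Ltac hunfold := cbv beta iota delta [hZ hadd hsub hmul hconj hnorm h1 h2 h3 h4].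
Ltac hring := hcase; hunfold; f_equal; ring.

Lemma hmulA x y z : hmul (hmul x y) z = hmul x (hmul y z).
Proof. hring. Qed.

Lemma hmul1r x : hmul x (hZ 1) = x.
Proof. hring. Qed.

Lemma hmul_conj_r x : hmul x (hconj x) = hZ (hnorm x).
Proof. hring. Qed.

Lemma hmul_conj_l x : hmul (hconj x) x = hZ (hnorm x).
Proof. hring. Qed.

Lemma hconjK x : hconj (hconj x) = x.
Proof. hring. Qed.

Lemma hconj_scale n x : hconj (hmul (hZ n) x) = hmul (hZ n) (hconj x).
Proof. hring. Qed.

Lemma hnorm_mul x y : hnorm (hmul x y) = hnorm x * hnorm y.
Proof. hcase; hunfold; ring. Qed.

Lemma hnorm_conj x : hnorm (hconj x) = hnorm x.
Proof. hcase; hunfold; ring. Qed.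

Lemma hnorm_hZ n : hnorm (hZ n) = n * n.
Proof. hunfold; ring. Qed.

Lemma four_hnorm x : 4 * hnorm x =
  (2 * h1 x + h3 x + h4 x) ^ 2 + (2 * h2 x + h3 x + h4 x) ^ 2
  + 2 * h3 x ^ 2 + 2 * h4 x ^ 2.
Proof. hcase; hunfold; ring. Qed.

Lemma hnorm_ge0 x : 0 <= hnorm x.
Proof.
  pose proof (four_hnorm x); rewrite !Z.pow_2_r in *.
  pose proof (Z.square_nonneg (2 * h1 x + h3 x + h4 x)).
  pose proof (Z.square_nonneg (2 * h2 x + h3 x + h4 x)).
  pose proof (Z.square_nonneg (h3 x)); pose proof (Z.square_nonneg (h4 x)).
  lia.
Qed.

Lemma hnorm_eq0 x : hnorm x = 0 -> x = hZ 0.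
Proof.
  intro H0; pose proof (four_hnorm x) as E; rewrite H0 in E.
  destruct x as [a b c d]; cbn [h1 h2 h3 h4] in E; rewrite !Z.pow_2_r in E.
  pose proof (Z.square_nonneg (2 * a + c + d)).
  pose proof (Z.square_nonneg (2 * b + c + d)).
  pose proof (Z.square_nonneg c); pose proof (Z.square_nonneg d).
  assert (c = 0 /\ d = 0) as [-> ->] by (split; apply Z.eq_square_0; lia).
  assert (a = 0 /\ b = 0) as [-> ->] by (split; apply Z.eq_square_0; lia).
  reflexivity.
Qed.

Lemma hnorm_gt0 x : x <> hZ 0 -> 0 < hnorm x.
Proof.
  intro Hx; pose proof (hnorm_ge0 x).
  enough (hnorm x <> 0) by lia.
  intro E; exact (Hx (hnorm_eq0 x E)).
Qed.

Lemma exists_near_multiple X M : 0 < M -> exists k, - M <= X - 2 * M * k < M.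
Proof.
  intro HM; exists ((X + M) / (2 * M)).
  pose proof (Z.div_mod (X + M) (2 * M)).
  pose proof (Z.mod_pos_bound (X + M) (2 * M)).
  lia.
Qed.

Lemma hmul_hZ_l n x : hmul (hZ n) x = mkH (n * h1 x) (n * h2 x) (n * h3 x) (n * h4 x).
Proof. hring. Qed.

Lemma hnorm_lt_of_bounds x M :
  - M <= 2 * h1 x + h3 x + h4 x < M -> - M <= 2 * h2 x + h3 x + h4 x < M ->
  - M <= 2 * h3 x < M -> - M <= 2 * h4 x < M -> hnorm x < M * M.
Proof.
  intros H1 H2 H3 H4; pose proof (four_hnorm x) as E; rewrite !Z.pow_2_r in E.
  assert (2 * h3 x * (2 * h3 x) <= M * M) by nia.
  assert (2 * h4 x * (2 * h4 x) <= M * M) by nia.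
  assert ((2 * h1 x + h3 x + h4 x) * (2 * h1 x + h3 x + h4 x) <= M * M) by nia.
  assert ((2 * h2 x + h3 x + h4 x) * (2 * h2 x + h3 x + h4 x) <= M * M) by nia.
  lia.
Qed.

Lemma exists_close_scale_multiple w M : 0 < M ->
  exists q, hnorm (hsub w (hmul (hZ M) q)) < M * M.
Proof.
  intro HM; destruct w as [a b c d].
  destruct (exists_near_multiple (2 * c) M HM) as [k3 Hk3].
  destruct (exists_near_multiple (2 * d) M HM) as [k4 Hk4].
  set (r := c - M * k3 + (d - M * k4)).
  destruct (exists_near_multiple (2 * a + r) M HM) as [k1 Hk1].
  destruct (exists_near_multiple (2 * b + r) M HM) as [k2 Hk2].
  exists (mkH k1 k2 k3 k4).
  apply hnorm_lt_of_bounds; rewrite hmul_hZ_l; cbn [hsub h1 h2 h3 h4];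
    unfold r in *; lia.
Qed.

Lemma exists_small_remainder z d : d <> hZ 0 -> exists q, hnorm (hsub z (hmul d q)) < hnorm d.
Proof.
  intro Hd; pose proof (hnorm_gt0 d Hd) as HM.
  destruct (exists_close_scale_multiple (hmul (hconj d) z) (hnorm d) HM) as [q Hq].
  exists q.
  assert (E : hmul (hconj d) (hsub z (hmul d q))
              = hsub (hmul (hconj d) z) (hmul (hZ (hnorm d)) q)) by hring.
  rewrite <- E, hnorm_mul, hnorm_conj in Hq; nia.
Qed.

Definition hdvd (d x : H122) : Prop := exists q, x = hmul d q.

Lemma right_bezout a b : exists d u v,
  d = hadd (hmul a u) (hmul b v) /\ hdvd d a /\ hdvd d b.
Proof.
  remember (Z.to_nat (hnorm b)) as n eqn:Hn.
  revert a b Hn; induction n as [n IH] using lt_wf_ind; intros a b Hn.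
  destruct (Z.eq_dec (hnorm b) 0) as [Hb|Hb].
  - apply hnorm_eq0 in Hb; subst b.
    exists a, (hZ 1), (hZ 0); split; [hring|split].
    + exists (hZ 1); hring.
    + exists (hZ 0); hring.
  - assert (Hb' : b <> hZ 0) by (intros ->; apply Hb; reflexivity).
    destruct (exists_small_remainder a b Hb') as [q Hq].
    pose proof (hnorm_ge0 (hsub a (hmul b q))).
    destruct (IH (Z.to_nat (hnorm (hsub a (hmul b q)))) ltac:(lia) b _ eq_refl)
      as [d [u [v [Hd [[q1 Hq1] [q2 Hq2]]]]]].
    exists d, v, (hsub u (hmul q v)); split; [|split].
    + subst d; hring.
    + exists (hadd q2 (hmul q1 q)).
      transitivity (hadd (hsub a (hmul b q)) (hmul b q)); [hring|].
      rewrite Hq2, Hq1; hring.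
    + now exists q1.
Qed.

Lemma divisors_of_prime_square p m n : prime p -> 0 <= m -> 0 <= n ->
  m * n = p * p -> m = 1 \/ m = p \/ n = 1.
Proof.
  intros Hp Hm Hn E; pose proof (prime_ge_2 p Hp).
  assert (Hdvd : (p | m * n)) by (exists p; lia).
  destruct (prime_mult p Hp m n Hdvd) as [[k ->]|[k ->]].
  - assert (Hk : (k | p)) by (exists n; nia).
    destruct (prime_divisors p Hp k Hk) as [-> | [-> | [-> | ->]]]; nia.
  - assert (Hm' : (m | p)) by (exists k; nia).
    destruct (prime_divisors p Hp m Hm') as [-> | [-> | [-> | ->]]]; nia.
Qed.

Lemma hdvd_scale_conj n x : hdvd (hZ n) (hconj x) -> hdvd (hZ n) x.
Proof.
  intros [w Hw]; exists (hconj w).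
  now rewrite <- (hconjK x), Hw, hconj_scale.
Qed.

Lemma hdvd_scale_of_unit_combination p m x u v :
  hnorm (hadd (hmul x u) (hmul (hZ p) v)) = 1 -> hnorm x = m * p ->
  hdvd (hZ p) x.
Proof.
  set (d := hadd (hmul x u) (hmul (hZ p) v)); intros Hd Hx.
  apply hdvd_scale_conj.
  (* conj x = conj x * (d * conj d), and conj x * d = N(x) u + p conj(x) v *)
  exists (hmul (hadd (hmul (hZ m) u) (hmul (hconj x) v)) (hconj d)).
  transitivity (hmul (hconj x) (hmul d (hconj d))).
  { now rewrite hmul_conj_r, Hd, hmul1r. }
  transitivity (hmul (hadd (hmul (hZ (hnorm x)) u) (hmul (hZ p) (hmul (hconj x) v))) (hconj d)).
  { rewrite <- hmulA; f_equal; unfold d; hring. }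
  rewrite Hx; generalize (hmul (hconj x) v) (hconj d); intros; hring.
Qed.

Lemma prime_dvd_hnorm_cases p x : prime p -> (p | hnorm x) ->
  hdvd (hZ p) x \/ exists d, hdvd d x /\ hnorm d = p.
Proof.
  intros Hp [m Hm].
  destruct (right_bezout x (hZ p)) as [d [u [v [Hd [[q1 Hq1] [q2 Hq2]]]]]].
  assert (HN : hnorm d * hnorm q2 = p * p) by (now rewrite <- hnorm_mul, <- Hq2, hnorm_hZ).
  destruct (divisors_of_prime_square p _ _ Hp (hnorm_ge0 d) (hnorm_ge0 q2) HN)
    as [Hd1|[Hdp|Hq21]].
  - left; subst d; exact (hdvd_scale_of_unit_combination p m x u v Hd1 Hm).
  - right; exists d; split; [now exists q1|exact Hdp].
  - left; exists (hmul (hconj q2) q1).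
    assert (Ed : d = hmul (hZ p) (hconj q2))
      by now rewrite Hq2, hmulA, hmul_conj_r, Hq21, hmul1r.
    rewrite Hq1, Ed; apply hmulA.
Qed.

Definition range (n : Z) : list Z := map Z.of_nat (seq 0 (Z.to_nat n)).

Lemma in_range n z : In z (range n) <-> 0 <= z < n.
Proof.
  unfold range; rewrite in_map_iff; split.
  - intros [k [<- Hk]]; apply in_seq in Hk; lia.
  - intro Hz; exists (Z.to_nat z); rewrite in_seq; lia.
Qed.

Lemma length_range n : length (range n) = Z.to_nat n.
Proof. unfold range; now rewrite length_map, length_seq. Qed.

Lemma NoDup_map_range (f : Z -> Z) n :
  (forall x y, 0 <= x < n -> 0 <= y < n -> f x = f y -> x = y) ->
  NoDup (map f (range n)).
Proof.
  intro Hf; apply NoDup_map_NoDup_ForallPairs.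
  - intros x y Hx Hy; apply Hf; now apply in_range.
  - apply NoDup_map_NoDup_ForallPairs; [intros x y _ _; lia|apply seq_NoDup].
Qed.

Lemma mod_eq_divide_sub p a b : 0 < p -> a mod p = b mod p -> (p | a - b).
Proof.
  intros Hp E; apply Z.mod_divide; [lia|].
  now rewrite Zminus_mod, E, Z.sub_diag.
Qed.

Lemma square_mod_inj p m x y : prime p -> p = 2 * m + 1 ->
  0 <= x <= m -> 0 <= y <= m -> (p | x * x - y * y) -> x = y.
Proof.
  intros Hp Hpm Hx Hy Hdvd.
  replace (x * x - y * y) with ((x - y) * (x + y)) in Hdvd by ring.
  destruct (prime_mult p Hp _ _ Hdvd) as [[k Hk]|[k Hk]]; assert (k = 0) by nia; lia.
Qed.

Lemma exists_sum_of_two_squares_plus_one_multiple p : prime p ->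
  exists x y, (p | x * x + y * y + 1).
Proof.
  intro Hp; pose proof (prime_ge_2 p Hp).
  destruct (Z.eq_dec p 2) as [->|Hp2]; [now exists 1, 0, 1|].
  set (m := p / 2).
  assert (Hpm : p = 2 * m + 1).
  { assert (Hodd : p mod 2 <> 0).
    { intro E; apply Z.mod_divide in E; [|lia].
      destruct (prime_divisors p Hp 2 E) as [? | [? | [? | ?]]]; lia. }
    pose proof (Z.div_mod p 2); pose proof (Z.mod_pos_bound p 2); lia. }
  (* pigeonhole: the m + 1 residues of x^2 and the m + 1 residues of -1 - y^2
     (0 <= x, y <= m) cannot all be distinct among the p = 2m + 1 residues *)
  set (L1 := map (fun x => (x * x) mod p) (range (m + 1))).
  set (L2 := map (fun y => (- 1 - y * y) mod p) (range (m + 1))).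
  destruct (classic (exists z, In z L1 /\ In z L2)) as [[z [H1 H2]]|Hdisj].
  - apply in_map_iff in H1 as [x [Ex _]]; apply in_map_iff in H2 as [y [Ey _]].
    exists x, y.
    replace (x * x + y * y + 1) with (x * x - (- 1 - y * y)) by ring.
    apply mod_eq_divide_sub; [lia|congruence].
  - exfalso.
    assert (HND : NoDup (L1 ++ L2)).
    { apply NoDup_app; [| |intros z H1 H2; apply Hdisj; eauto];
        apply NoDup_map_range; intros x y Hx Hy E; apply mod_eq_divide_sub in E; try lia.
      - apply (square_mod_inj p m); auto; lia.
      - symmetry; apply (square_mod_inj p m); auto; try lia.
        now replace (y * y - x * x) with (- 1 - x * x - (- 1 - y * y)) by ring. }
    assert (Hincl : incl (L1 ++ L2) (range p)).
    { intros z Hz; apply in_range.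
      apply in_app_or in Hz as [Hz|Hz]; apply in_map_iff in Hz as [x [<- _]];
        pose proof (Z.mod_pos_bound (x * x) p); pose proof (Z.mod_pos_bound (- 1 - x * x) p); lia. }
    pose proof (NoDup_incl_length HND Hincl) as Hlen.
    unfold L1, L2 in Hlen; rewrite length_app, !length_map, !length_range in Hlen; lia.
Qed.

Lemma prime_is_hnorm p : prime p -> exists a, hnorm a = p.
Proof.
  intro Hp; pose proof (prime_ge_2 p Hp).
  destruct (exists_sum_of_two_squares_plus_one_multiple p Hp) as [x [y Hxy]].
  (* x^2 + y^2 + 1 is the norm of x + y i + (j + k) / sqrt 2 *)
  replace (x * x + y * y + 1) with (hnorm (mkH (x - 1) (y - 1) 1 1)) in Hxy
    by (hunfold; ring).
  destruct (prime_dvd_hnorm_cases p _ Hp Hxy) as [[w Hw]|[d [_ Hd]]]; [|now exists d].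
  apply (f_equal h3) in Hw; rewrite hmul_hZ_l in Hw; cbn [h3] in Hw.
  apply eq_sym, Z.eq_mul_1 in Hw; lia.
Qed.

Definition hprime (x : H122) : Prop :=
  x <> hZ 0 /\ hnorm x <> 1 /\
  forall a b, x = hmul a b -> hnorm a = 1 \/ hnorm b = 1.

Lemma hprime_not_hdvd_scale p x : prime p -> hprime x -> ~ hdvd (hZ p) x.
Proof.
  intros Hp [_ [_ Hx]] [w Hw]; pose proof (prime_ge_2 p Hp).
  destruct (prime_is_hnorm p Hp) as [a Ha].
  assert (E : x = hmul a (hmul (hconj a) w))
    by now rewrite Hw, <- hmulA, hmul_conj_r, Ha.
  pose proof (hnorm_ge0 w).
  destruct (Hx _ _ E) as [H1|H1]; rewrite ?hnorm_mul, ?hnorm_conj, Ha in H1;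
    [lia|apply Z.eq_mul_1 in H1; lia].
Qed.

Lemma exists_prime_divisor n : 1 < n -> exists p, prime p /\ (p | n).
Proof.
  induction n as [n IH] using (well_founded_induction (Z.lt_wf 0)); intro Hn.
  destruct (prime_dec n) as [Hp|Hp]; [exists n; split; [exact Hp|apply Z.divide_refl]|].
  destruct (not_prime_divide n Hn Hp) as [m [Hm Hmn]].
  destruct (IH m ltac:(lia) ltac:(lia)) as [p [Hp' Hpm]].
  exists p; split; [exact Hp'|exact (Z.divide_trans _ _ _ Hpm Hmn)].
Qed.

Lemma hprime_iff_prime_hnorm x : hprime x <-> prime (hnorm x).
Proof.
  split.
  - intros Hx; pose proof Hx as [Hx0 [Hx1 Hirr]]; pose proof (hnorm_gt0 x Hx0).
    destruct (exists_prime_divisor (hnorm x) ltac:(lia)) as [p [Hp Hpx]].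
    pose proof (prime_ge_2 p Hp).
    destruct (prime_dvd_hnorm_cases p x Hp Hpx) as [Hdvd|[d [[q Hq] Hd]]].
    + now destruct (hprime_not_hdvd_scale p x Hp Hx).
    + destruct (Hirr d q Hq) as [Hd1|Hq1]; [lia|].
      now rewrite Hq, hnorm_mul, Hd, Hq1, Z.mul_1_r.
  - intro Hp; pose proof (prime_ge_2 _ Hp); split; [|split].
    + intros ->; now apply not_prime_0.
    + lia.
    + intros a b ->; rewrite hnorm_mul in *.
      pose proof (hnorm_ge0 a); pose proof (hnorm_ge0 b).
      destruct (prime_divisors _ Hp (hnorm a) (Z.divide_factor_l _ _))
        as [? | [? | [? | ?]]]; [lia|now left|right; nia|lia].
Qed.

Open Scope R_scope.

Definition to_quat (x : H122) : quat :=
  qadd (qadd (qscale (IZR (h1 x)) v1) (qscale (IZR (h2 x)) v2))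
       (qadd (qscale (IZR (h3 x)) v3) (qscale (IZR (h4 x)) v4)).

Lemma inH_iff_to_quat q : inH q <-> exists x, q = to_quat x.
Proof.
  split.
  - intros [a [b [c [d E]]]]; now exists (mkH a b c d).
  - intros [x ->]; now exists (h1 x), (h2 x), (h3 x), (h4 x).
Qed.

Lemma sqrt2_sqr : sqrt 2 * sqrt 2 = 2.
Proof. apply sqrt_sqrt; lra. Qed.

Ltac qunfold := cbv beta iota delta
  [to_quat qadd qscale qmul qconj qnorm qreal v1 v2 v3 v4 qone qi qj qk q0 q1 q2 q3].

Lemma to_quat_mul x y : qmul (to_quat x) (to_quat y) = to_quat (hmul x y).
Proof.
  destruct x as [a b c d], y as [e f g h]; qunfold; hunfold.
  repeat rewrite ?plus_IZR, ?minus_IZR, ?mult_IZR, ?opp_IZR.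
  pose proof sqrt2_sqr as E; f_equal; ring_simplify [E]; field.
Qed.

Lemma to_quat_norm x : qnorm (to_quat x) = qreal (IZR (hnorm x)).
Proof.
  destruct x as [a b c d]; qunfold; hunfold.
  repeat rewrite ?plus_IZR, ?mult_IZR.
  pose proof sqrt2_sqr as E; f_equal; ring_simplify [E]; field.
Qed.

Lemma to_quat_hZ n : to_quat (hZ n) = qreal (IZR n).
Proof. qunfold; hunfold; f_equal; field. Qed.

Lemma to_quat_inj x y : to_quat x = to_quat y -> x = y.
Proof.
  destruct x as [a b c d], y as [e f g h]; qunfold; cbn [h1 h2 h3 h4].
  intro E; injection E as E0 E1 E2 E3.
  assert (Hs : 0 < sqrt 2) by (apply sqrt_lt_R0; lra).
  assert (IZR c = IZR g /\ IZR d = IZR h) as [Hc Hd] by (split; nra).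
  assert (IZR a = IZR e /\ IZR b = IZR f) as [Ha Hb] by (split; lra).
  apply eq_IZR in Ha, Hb, Hc, Hd; now subst.
Qed.

Lemma isUnitH_to_quat x : isUnitH (to_quat x) <-> hnorm x = 1%Z.
Proof.
  split.
  - intros [_ [v [Hv [E _]]]]; apply inH_iff_to_quat in Hv as [y ->].
    rewrite to_quat_mul in E; change qone with (qreal (IZR 1)) in E.
    rewrite <- to_quat_hZ in E; apply to_quat_inj, (f_equal hnorm) in E.
    rewrite hnorm_mul in E.
    exact (proj1 (Z.eq_mul_1_nonneg _ _ (hnorm_ge0 x) E)).
  - intro Hx; split; [apply inH_iff_to_quat; now exists x|].
    exists (to_quat (hconj x)); split; [apply inH_iff_to_quat; now exists (hconj x)|].
    rewrite !to_quat_mul, hmul_conj_r, hmul_conj_l, Hx, to_quat_hZ; split; reflexivity.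
Qed.

Lemma isPrimeH_to_quat x : isPrimeH (to_quat x) <-> hprime x.
Proof.
  split.
  - intros [_ [H0 [H1 Hirr]]]; split; [|split].
    + intros ->; apply H0, to_quat_hZ.
    + now rewrite <- isUnitH_to_quat.
    + intros a b ->.
      rewrite <- !isUnitH_to_quat; apply Hirr; try apply inH_iff_to_quat; eauto.
      apply eq_sym, to_quat_mul.
  - intros [H0 [H1 Hirr]]; split; [apply inH_iff_to_quat; now exists x|split; [|split]].
    + intro E; apply H0, to_quat_inj; rewrite E; apply eq_sym, to_quat_hZ.
    + now rewrite isUnitH_to_quat.
    + intros a b Ha Hb E.
      apply inH_iff_to_quat in Ha as [a' ->], Hb as [b' ->].
      rewrite to_quat_mul in E; apply to_quat_inj in E.
      rewrite !isUnitH_to_quat; exact (Hirr a' b' E).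
Qed.

Lemma norm_is_rational_prime_to_quat x :
  norm_is_rational_prime (to_quat x) <-> prime (hnorm x).
Proof.
  unfold norm_is_rational_prime; rewrite to_quat_norm; split.
  - intros [p [Hp E]]; injection E as E; apply eq_IZR in E; now rewrite E.
  - intro Hp; now exists (hnorm x).
Qed.

Theorem theorem37 : forall pi : quat, inH pi ->
  (isPrimeH pi <-> norm_is_rational_prime pi).
Proof.
  intros pi Hpi; apply inH_iff_to_quat in Hpi as [x ->].
  rewrite isPrimeH_to_quat, norm_is_rational_prime_to_quat.
  apply hprime_iff_prime_hnorm.
Qed.
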